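(* Let $b_1<b_2$ and $T\ge b_1+b_2$ be positive integers, write $T-b_1=pb_2+q$ with $p\ge1$ and $1\le q<b_2$, and let $k=T-b_1$. Over the $(b_1,T-b_2)$ burst erasure channel, the SR code (defined in the context) has the extended delay profile $$(\underbrace{pb_1+q,\dots,pb_1+q}_{b_2},\underbrace{pb_1,\dots,pb_1}_{q},\underbrace{(p-1)b_1,\dots,(p-1)b_1}_{b_2},\dots,\underbrace{2b_1,\dots,2b_1}_{b_2},\underbrace{b_1,\dots,b_1}_{b_2})$$ with combined symbols $c_j(t)=s_j[t]$ for all $j$, except that when $q<b_1$ and $j\in[b_2+q+1,2b_2+q]$ the combined symbol is $c_j(t)=s_j[t]+m_j(t)$ with $$m_j(t)=\sum_{\ell\in[b_1-1]:\ q+(\ell\bmod(b_1-q))=j-b_2-q} s_{b_2+(\ell\bmod q)}[t-\ell].$$ In particular the profile is extended delay separable with $A_D=[b_2+q+1,2b_2+q]\cap[k]$ and $A_I=[k]\setminus A_D$ (every $m_j(t)$ involves only symbols $s_{j'}[t']$ with $j'\in[b_2+1,b_2+q]\subseteq A_I$ and $t'<t$).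
   Context: Convention: $m\bmod n$ denotes the representative of $m$ modulo $n$ in $\{1,\dots,n\}$. Point-to-point code: given $P_0,\dots,P_M\in\mathbb F^{k\times(n-k)}$ ($P_i=0$ for $i\notin[0,M]$), messages $S[t]=(s_1[t],\dots,s_k[t])\in\mathbb F^k$ ($S[t]=0$ for $t<0$) are sent as $(S[t],P[t])$, $P[t]=\sum_{i=0}^M S[t-i]P_i$; a $(b,M)$ burst channel erases packets so that in every window of $M+1$ consecutive slots the erased slots form at most one run of consecutive slots of length at most $b$. Extended delay profile: given for each $i\in[k]$, $t\in\mathbb N$ a linear combination $m_i(t)$ of symbols $s_j[t']$ with $t'<t$, the code has extended delay profile $(t_1,\dots,t_k)$ with combined symbols $s_i[t]+m_i(t)$ if, for every admissible erasure pattern and all $t,i$, the value $s_i[t]+m_i(t)$ is determined by the packets received at times $\le t+t_i$. It is extended delay separable with partition $[k]=A_I\sqcup A_D$ if $m_i\equiv0$ for $i\in A_I$ and, for $i\in A_D$, $m_i(t)$ is a linear combination of symbols $s_j[t-d]$ with $d>0$, $j\in A_I$. SR code (memory $M=T-b_2$, $k=T-b_1$, $n-k=b_2$): $P_i\in\mathbb F_2^{k\times b_2}$, $i\in[0,T-b_2]$: (i) for $j\in[p-1]$, $P_{jb_1}$ has $I_{b_2}$ in rows $(p-j)b_2+q+1,\dots,(p-j+1)b_2+q$, zeros elsewhere; (ii) for $j\in[b_1-1]$, $P_{(p-1)b_1+j}=0$ if $q\ge b_1$, and if $q<b_1$ it has a single $1$ at position $(b_2+(j\bmod q),\,q+(j\bmod(b_1-q)))$;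 (iii) $P_{pb_1}(b_2+r,r)=1$ for $r\in[q]$, zeros elsewhere; (iv) $P_{pb_1+q}$ has $I_{b_2}$ in rows $1,\dots,b_2$, zeros elsewhere; all other $P_i=0$. *)

From mathcomp Require Import all_boot all_order all_algebra.
Set Implicit Arguments. Unset Strict Implicit. Unset Printing Implicit Defensive.
Import GRing.Theory.
Local Open Scope ring_scope.

Notation F := 'F_2.

(* The paper's convention: m mod n is the representative in {1,...,n}. *)
Definition modc (m n : nat) : nat :=
  let r := (m %% n)%N in if r == 0%N then n else r.

(** Messages S : nat -> 'rV_k (times t >= 0; S[t] = 0 for t < 0 is built in),
    P : nat -> 'M_(k, r) the matrices P_0,...,P_M (P_i = 0 for i > M). *)
Definition parity (k r M : nat) (P : nat -> 'M[F]_(k, r))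
  (S : nat -> 'rV[F]_k) (t : nat) : 'rV[F]_r :=
  \sum_(i < M.+1) (if (i <= t)%N then S (t - i)%N *m P i else 0).

(** Erasure pattern E (E tau = packet at time tau is erased) admissible for
    the (b, M) burst channel: in every window [w, w+M] of M+1 consecutive
    slots the erased slots form at most one run [a, a+l) with l <= b. *)
Definition burst_admissible (b M : nat) (E : nat -> bool) : Prop :=
  forall w : nat, exists a l : nat, (l <= b)%N /\
    forall x : nat, (w <= x <= w + M)%N -> (E x = true <-> (a <= x < a + l)%N).

(** m_i(t) given by coefficients: m_i(t) = sum_{j, 1<=d<=t} mc i t j d * s_j[t-d]
    (symbols at negative times are 0, so this is an arbitrary linear
    combination of symbols s_j[t'] with t' < t). *)
Definition mpart (k : nat) (mc : 'I_k -> nat -> 'I_k -> nat -> F)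
  (S : nat -> 'rV[F]_k) (i : 'I_k) (t : nat) : F :=
  \sum_(j < k) \sum_(1 <= d < t.+1) mc i t j d * S (t - d)%N 0 j.

Definition combined (k : nat) (mc : 'I_k -> nat -> 'I_k -> nat -> F)
  (S : nat -> 'rV[F]_k) (i : 'I_k) (t : nat) : F :=
  S t 0 i + mpart mc S i t.

(** Extended delay profile (delay i)_i with combined symbols given by mc,
    over the (b, M) burst channel: for every admissible erasure pattern,
    s_i[t] + m_i(t) is determined by (is a function of) the packets
    (S[tau], P[tau]) received at times tau <= t + delay i. *)
Definition ext_delay_profile (k r M : nat) (P : nat -> 'M[F]_(k, r)) (b : nat)
  (delay : 'I_k -> nat) (mc : 'I_k -> nat -> 'I_k -> nat -> F) : Prop :=
  forall E : nat -> bool, burst_admissible b M E ->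
  forall (S S' : nat -> 'rV[F]_k) (t : nat) (i : 'I_k),
    (forall tau : nat, (tau <= t + delay i)%N -> ~~ E tau ->
       S tau = S' tau /\ parity M P S tau = parity M P S' tau) ->
    combined mc S i t = combined mc S' i t.

Definition ext_delay_separable (k r M : nat) (P : nat -> 'M[F]_(k, r)) (b : nat)
  (delay : 'I_k -> nat) (mc : 'I_k -> nat -> 'I_k -> nat -> F)
  (AI : pred 'I_k) : Prop :=
  ext_delay_profile M P b delay mc /\
  (forall i t j d, AI i -> mc i t j d = 0) /\
  (forall i t j d, ~~ AI i -> ~~ AI j -> mc i t j d = 0).

(** The SR code, T - b1 = p*b2 + q, k = T - b1, n - k = b2, memory T - b2.
    Entries with 1-indexed row rr in [k], column cc in [b2]. *)
Definition SR_entry (b1 b2 p q i rr cc : nat) : bool :=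
  if [&& (0 < i)%N, (b1 %| i)%N & (i %/ b1 < p)%N] then
    (* (i) P_{j b1}, j in [p-1]: I_{b2} in rows R+1..R+b2, R=(p-j)b2+q *)
    let R := ((p - i %/ b1) * b2 + q)%N in
    [&& (R < rr <= R + b2)%N & rr == (R + cc)%N]
  else if ((p - 1) * b1 < i < p * b1)%N then
    (* (ii) P_{(p-1)b1 + j}, j in [b1-1] *)
    let j := (i - (p - 1) * b1)%N in
    [&& (q < b1)%N, rr == (b2 + modc j q)%N & cc == (q + modc j (b1 - q))%N]
  else if i == (p * b1)%N then
    (* (iii) P_{p b1}(b2 + r, r) = 1, r in [q] *)
    (cc <= q)%N && (rr == b2 + cc)%N
  else if i == (p * b1 + q)%N then
    (* (iv) I_{b2} in rows 1..b2 *)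
    (rr <= b2)%N && (rr == cc)
  else false.

Definition SR_P (b1 b2 T p q : nat) (i : nat) : 'M[F]_(T - b1, b2) :=
  \matrix_(rr, cc) (if SR_entry b1 b2 p q i rr.+1 cc.+1 then 1 else 0).

(** The delay profile, for 1-indexed j = i.+1:
    j in [1,b2] -> p b1 + q ; j in [b2+1, b2+q] -> p b1 ;
    j in [r b2 + q + 1, (r+1) b2 + q] (1 <= r <= p-1) -> (p - r) b1. *)
Definition SR_delay (b1 b2 T p q : nat) (i : 'I_(T - b1)) : nat :=
  let j := i.+1 in
  if (j <= b2)%N then (p * b1 + q)%N
  else if (j <= b2 + q)%N then (p * b1)%N
  else ((p - (j - q - 1) %/ b2) * b1)%N.

Definition SR_AI (b1 b2 T q : nat) : pred 'I_(T - b1) :=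
  fun i => ~~ (b2 + q < i.+1 <= 2 * b2 + q)%N.

(** Coefficients of m_j(t): when q < b1 and j in [b2+q+1, 2b2+q],
    m_j(t) = sum_{l in [b1-1], q + (l mod (b1-q)) = j - b2 - q} s_{b2 + (l mod q)}[t - l];
    otherwise m_j = 0. Coefficient of s_{j'}[t-d] (j' = jj.+1). *)
Definition SR_mc (b1 b2 T q : nat) (i : 'I_(T - b1)) (t : nat)
  (jj : 'I_(T - b1)) (d : nat) : F :=
  if [&& (q < b1)%N, (b2 + q < i.+1 <= 2 * b2 + q)%N, (0 < d < b1)%N,
         (q + modc d (b1 - q) == i.+1 - b2 - q)%N & (jj.+1 == b2 + modc d q)%N]
  then 1 else 0.

Arguments SR_P : clear implicits.
Arguments SR_delay : clear implicits.
Arguments SR_AI : clear implicits.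
Arguments SR_mc : clear implicits.

From mathcomp Require Import all_boot all_algebra zify.
Set Implicit Arguments. Unset Strict Implicit. Unset Printing Implicit Defensive.
Import GRing.Theory.

(* By linearity it suffices to show: if the difference D of two message streams
   vanishes, together with its parity, at every unerased slot up to the decoding
   horizon H, then the combined symbol vanishes.  An erased slot lies in a burst
   [a, e) of length at most b1 outside which every slot within distance M is
   unerased.  For each row one picks a column and a slot past the burst whose
   parity equation contains the wanted symbol with coefficient 1, and checks that
   every other symbol in it is either unerased or already recovered.  Rows
   b2+1..b2+q are recovered backwards through the burst using P_{(p-1)b1+l},
   rows 1..b2 using P_{pb1+q}, and rows of block r >= 2 using P_{(p-r)b1}.  For the first block the entries of P_{(p-1)b1+l} cannot be
   separated from the wanted symbol: the parity equation at t + (p-1)b1 is exactly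
   the combined symbol s_j[t] + m_j(t).  If that slot is erased instead, then
   t-b1+1..t are unerased and the combined symbol is read off directly. *)

Lemma modc_gt0 m n : 0 < n -> 0 < modc m n.
Proof. by move=> n_gt0; rewrite /modc; case: eqP => // /eqP; rewrite lt0n. Qed.

Lemma modc_le m n : 0 < n -> modc m n <= n.
Proof. by move=> n_gt0; rewrite /modc; case: eqP => // _; rewrite ltnW ?ltn_mod. Qed.

Lemma modc_modn m n : 0 < n -> modc m n %% n = m %% n.
Proof. by move=> n_gt0; rewrite /modc; case: eqP => [->|_]; rewrite ?modnn ?modn_mod. Qed.

Lemma modcDr m n : modc (m + n) n = modc m n.
Proof. by rewrite /modc modnDr. Qed.

Lemma modc_small m n : 0 < m <= n -> modc m n = m.
Proof.
case/andP=> m_gt0; rewrite leq_eqVlt => /orP[/eqP ->|lt_mn]; first by rewrite /modc modnn.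
by rewrite /modc modn_small //; case: eqP => // m0; rewrite m0 in m_gt0.
Qed.

Lemma modc_window L n x : 0 < n -> 0 < x <= n ->
  exists2 l, L < l <= L + n & modc l n = x.
Proof.
move=> n_gt0 x_in; elim: L => [|L [l l_in <-]].
  by exists x; rewrite ?add0n ?modc_small.
have [le_lL|lt_Ll] := leqP l L.+1; last by exists l => //; lia.
by exists (l + n); rewrite ?modcDr //; lia.
Qed.

Lemma modc_gap l l' n : 0 < n -> modc l n = modc l' n -> l < l' -> l + n <= l'.
Proof.
move=> n_gt0 eq_lc lt_ll'.
have : l' == l %[mod n] by rewrite -(modc_modn l' n_gt0) -(modc_modn l n_gt0) eq_lc.
rewrite eqn_mod_dvd ?(ltnW lt_ll') // => /dvdn_leq; rewrite subn_gt0 => /(_ lt_ll'); lia.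
Qed.

Definition isolated_burst (b M : nat) (E : nat -> bool) (a e : nat) : Prop :=
  e <= a + b /\
  forall x y, a <= y < e -> x <= y + M -> y <= x + M -> E x -> a <= x < e.

Lemma isolated_burst_unerased b M E a e x y : isolated_burst b M E a e ->
  a <= y < e -> x <= y + M -> y <= x + M -> x < a \/ e <= x -> ~~ E x.
Proof.
by case=> _ isol y_in x_le y_le x_out; apply/negP => /(isol x y y_in x_le y_le); lia.
Qed.

Section BurstChannel.

Variables (b M : nat) (E : nat -> bool).
Hypothesis E_adm : burst_admissible b M E.

Lemma erased_interval x y : E x -> E y -> x <= y <= x + M ->
  y < x + b /\ forall w, x <= w <= y -> E w.
Proof.
move=> Ex Ey /andP[le_xy le_yx]; have [a [l [le_lb run]]] := E_adm x.
have /run/proj1/(_ Ex) : x <= x <= x + M by rewrite leqnn leq_addr.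
have /run/proj1/(_ Ey) : x <= y <= x + M by rewrite le_xy le_yx.
move=> y_run x_run; split; first by lia.
by move=> w w_in; apply/(run w); lia.
Qed.

Lemma isolated_burst_around z : b <= M -> E z ->
  exists a e, a <= z < e /\ isolated_burst b M E a e.
Proof.
move=> le_bM Ez.
have ex_a : exists a, all E (index_iota a z.+1).
  by exists z; rewrite /index_iota subSnn /= Ez.
have ex_e : exists e, (z <= e) && ~~ E e.
  exists (z + b); rewrite leq_addr /=; apply/negP => Ezb.
  by have [] := erased_interval Ez Ezb; lia.
case: (ex_minnP ex_a) => a /allP Ea min_a; case: (ex_minnP ex_e) => e /andP[le_ze nEe] min_e.
have le_az : a <= z by apply: min_a; rewrite /index_iota subSnn /= Ez.
have lt_ze : z < e by rewrite ltn_neqAle le_ze andbT; apply: contraNneq nEe => <-.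
have E_burst w : a <= w < e -> E w.
  case/andP=> le_aw lt_we; have [le_wz|lt_zw] := leqP w z.
    by apply: Ea; rewrite mem_index_iota; lia.
  by apply: contraTT lt_we => nEw; rewrite -leqNgt min_e // nEw ltnW.
exists a, e; split; first by rewrite le_az.
split.
  rewrite leqNgt; apply/negP => lt_ab.
  have [] := erased_interval (E_burst a _) (E_burst (a + b) _) => //; lia.
move=> x y y_in le_x le_y Ex; have Ey := E_burst y y_in.
have [lt_xa|le_ax] := ltnP x a.
  have /(erased_interval Ex Ey) [_ E_xy] : x <= y <= x + M by lia.
  suff : a.-1 >= a by lia.
  apply: min_a; apply/allP => w; rewrite mem_index_iota => w_in.
  by have [le_aw|lt_wa] := leqP a w; [apply: E_burst | apply: E_xy]; lia.
rewrite ltnNge; apply/negP => le_ex.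
have /(erased_interval Ey Ex) [_ E_yx] : y <= x <= y + M by lia.
by move: nEe; rewrite E_yx //; lia.
Qed.

End BurstChannel.

Section Sums.

Local Open Scope ring_scope.
Variable V : nmodType.

Lemma sum_pair_pred1 n m (G : nat -> 'I_m -> V) i0 j0 : (i0 < n)%N ->
  \sum_(i < n) \sum_(j < m) (if (i == i0 :> nat) && (j == j0) then G i j else 0) = G i0 j0.
Proof.
move=> lt_i0n; rewrite (bigD1 (Ordinal lt_i0n)) //= [X in _ + X]big1 => [|i neq_i].
  rewrite addr0 (bigD1 j0) //= !eqxx [X in _ + X]big1 ?addr0 // => j /negPf neq_j.
  by rewrite neq_j andbF.
by apply: big1 => j _; rewrite -val_eqE /= in neq_i; rewrite (negPf neq_i).
Qed.

Lemma sum_nat_zero_tail m n1 n2 (G : nat -> V) : (m <= n1 <= n2)%N ->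
  (forall d, (n1 <= d < n2)%N -> G d = 0) -> \sum_(m <= d < n2) G d = \sum_(m <= d < n1) G d.
Proof.
move=> /andP[le_mn1 le_n12] G0; rewrite (big_cat_nat le_mn1 le_n12) /=.
rewrite [X in _ + X]big_nat_cond [X in _ + X]big1 ?addr0 // => d /andP[d_in _].
exact: G0.
Qed.

Lemma sum_ord_window n m l (G : nat -> V) : (0 < l)%N -> (m + l <= n)%N ->
  \sum_(i < n) (if (m < i < m + l)%N then G i else 0) = \sum_(1 <= d < l) G (m + d).
Proof.
move=> l_gt0 le_mln.
rewrite -(big_mkord xpredT (fun i => if (m < i < m + l)%N then G i else 0)).
rewrite (big_cat_nat (leq0n m.+1) (_ : m.+1 <= n)%N) /=; last by lia.
rewrite [X in X + _]big_nat_cond [X in X + _]big1 ?add0r => [|i]; last first.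
  by case/andP=> /andP[_ lt_im] _; rewrite ltnNge -ltnS lt_im.
rewrite (big_cat_nat (_ : m.+1 <= m + l)%N le_mln) //=; last by lia.
rewrite [X in _ + X]big_nat_cond [X in _ + X]big1 ?addr0 => [|i]; last first.
  by case/andP=> /andP[le_i _] _; rewrite [(i < _)%N]ltnNge le_i andbF.
rewrite -[m.+1]add1n big_addn addKn; apply: eq_big_nat => d /andP[d_gt0 lt_dl].
by rewrite ifT ?(addnC d) //; lia.
Qed.

End Sums.

Section ParityEquations.

Local Open Scope ring_scope.

Variables (k r M : nat) (P : nat -> 'M[F]_(k, r)).

Lemma parityB (S S' : nat -> 'rV[F]_k) t :
  parity M P (fun x => S x - S' x) t = parity M P S t - parity M P S' t.
Proof.
rewrite /parity -sumrB; apply: eq_bigr => i _.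
by case: ifP => _; rewrite ?mulmxBl ?subr0.
Qed.

Definition parity_term (D : nat -> 'rV[F]_k) t c i rr :=
  if (i <= t)%N then D (t - i)%N 0 rr * P i rr c else 0.

Lemma parity_entry (D : nat -> 'rV[F]_k) t c :
  parity M P D t 0 c = \sum_(i < M.+1) \sum_(rr < k) parity_term D t c i rr.
Proof.
rewrite /parity summxE; apply: eq_bigr => i _; rewrite /parity_term.
by case: ifP => _; rewrite mxE // big1.
Qed.

Lemma parity_entry_restrict (D : nat -> 'rV[F]_k) t c (keep : nat -> 'I_k -> bool) :
  (forall (i : 'I_M.+1) rr, (i <= t)%N -> P i rr c != 0 -> ~~ keep i rr ->
     D (t - i)%N 0 rr = 0) ->
  parity M P D t 0 c =
    \sum_(i < M.+1) \sum_(rr < k) (if keep i rr then parity_term D t c i rr else 0).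
Proof.
move=> D0; rewrite parity_entry; apply: eq_bigr => i _; apply: eq_bigr => rr _.
rewrite /parity_term; case: ifP => // nkeep; case: ifP => // le_it.
have [->|nzP] := eqVneq (P i rr c) 0; first by rewrite mulr0.
by rewrite D0 ?mul0r ?nkeep ?le_it.
Qed.

Lemma parity_isolate (D : nat -> 'rV[F]_k) t c i0 rr0 :
  (i0 <= M)%N -> (i0 <= t)%N -> P i0 rr0 c = 1 -> parity M P D t = 0 ->
  (forall (i : 'I_M.+1) rr, (i <= t)%N -> P i rr c != 0 ->
     ~~ ((i == i0 :> nat) && (rr == rr0)) -> D (t - i)%N 0 rr = 0) ->
  D (t - i0)%N 0 rr0 = 0.
Proof.
move=> le_i0M le_i0t P1 parity0 D0.
have := parity_entry_restrict (keep := fun i rr => (i == i0)%N && (rr == rr0)) D0.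
rewrite parity0 mxE sum_pair_pred1 ?ltnS //.
by rewrite /parity_term le_i0t P1 mulr1.
Qed.

End ParityEquations.

Section CombinedSymbols.

Local Open Scope ring_scope.

Variables (k : nat) (mc : 'I_k -> nat -> 'I_k -> nat -> F).

Lemma combinedB (S S' : nat -> 'rV[F]_k) i t :
  combined mc (fun x => S x - S' x) i t = combined mc S i t - combined mc S' i t.
Proof.
rewrite /combined /mpart !mxE opprD addrACA; congr (_ + _).
rewrite -sumrB; apply: eq_bigr => j _; rewrite -sumrB; apply: eq_bigr => d _.
by rewrite !mxE mulrBr.
Qed.

Lemma mpart_eq0 (D : nat -> 'rV[F]_k) i t :
  (forall j d, mc i t j d = 0) -> mpart mc D i t = 0.
Proof. by move=> mc0; apply: big1 => j _; apply: big1 => d _; rewrite mc0 mul0r. Qed.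

End CombinedSymbols.

Lemma mul_sub1n m n : 0 < m -> m * n = (m - 1) * n + n.
Proof. by move=> m_gt0; rewrite -mulSnr subn1 prednK. Qed.

Lemma ltn_mul_addn m m' n : m < m' -> m * n + n <= m' * n.
Proof. by move=> lt_mm'; rewrite -mulSnr leq_mul2r lt_mm' orbT. Qed.

(* After [zify] a product of naturals is a product of integers, whose sign [lia]
   cannot see; naming each product first keeps it a natural-number atom. *)
Ltac lia_mul := repeat match goal with
  | |- context [?m * ?n] => let E := fresh in remember (m * n) eqn:E in *; clear E
  | _ : context [?m * ?n] |- _ => let E := fresh in remember (m * n) eqn:E in *; clear E
  end; lia.

Section SRCode.

Variables b1 b2 T p q : nat.
Local Notation k := (T - b1).
Local Notation M := (T - b2).
Local Notation P := (SR_P b1 b2 T p q).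

Hypotheses (b1_gt0 : 0 < b1) (le_b1b2 : b1 <= b2) (p_gt0 : 0 < p) (q_gt0 : 0 < q)
  (lt_qb2 : q < b2) (delay_le_M : p * b1 + q <= M).

Lemma SR_PE i (rr : 'I_k) (c : 'I_b2) :
  P i rr c = if SR_entry b1 b2 p q i rr.+1 c.+1 then 1%R else 0%R.
Proof. by rewrite mxE. Qed.

Lemma band_not_block i : (p - 1) * b1 < i < p * b1 -> ~~ (b1 %| i).
Proof.
move=> /andP[lt_i lt_pb1]; apply/negP => /dvdnP[j def_i]; subst i.
rewrite !ltn_pmul2r // in lt_i lt_pb1; lia.
Qed.

(* The four cases are the families (iv), (i), (iii) and (ii) of the SR code. *)
Lemma SR_P_support i (rr : 'I_k) (c : 'I_b2) : P i rr c != 0%R ->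
  [\/ i = p * b1 + q /\ rr.+1 = c.+1,
      exists2 j, 0 < j < p & i = j * b1 /\ rr.+1 = (p - j) * b2 + q + c.+1,
      [/\ i = p * b1, c.+1 <= q & rr.+1 = b2 + c.+1] |
      exists2 l, 0 < l < b1 &
        [/\ i = (p - 1) * b1 + l, q < b1, rr.+1 = b2 + modc l q
          & c.+1 = q + modc l (b1 - q)]].
Proof.
rewrite SR_PE; case: ifP => [+ _|]; last by rewrite eqxx.
rewrite /SR_entry; case: ifP => [/and3P[i_gt0 dvd_b1 lt_p] /andP[_ /eqP rrE]|_].
  apply: Or42; exists (i %/ b1); last by rewrite divnK.
  by rewrite divn_gt0 // lt_p andbT dvdn_leq.
case: ifP => [band /and3P[lt_qb1 /eqP rrE /eqP cE]|_].
  apply: Or44; exists (i - (p - 1) * b1); last by split => //; lia.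
  by have := mul_sub1n b1 p_gt0; lia.
case: ifP => [/eqP -> /andP[le_cq /eqP rrE]|_]; first exact: Or43.
by case: ifP => // /eqP -> /andP[_ /eqP rrE]; apply: Or41.
Qed.

Lemma SR_P_last (rr : 'I_k) (c : 'I_b2) : rr.+1 = c.+1 ->
  P (p * b1 + q) rr c = 1%R.
Proof.
move=> rrE; rewrite SR_PE (_ : SR_entry _ _ _ _ _ _ _ = true) // /SR_entry rrE.
have -> : [&& 0 < p * b1 + q, b1 %| p * b1 + q & (p * b1 + q) %/ b1 < p] = false.
  by rewrite divnMDl // [_ + _ < p]ltnNge leq_addr !andbF.
rewrite ifF; last by apply/negbTE; lia.
by rewrite ifF ?eqxx ?ltn_ord //; apply/negbTE; lia.
Qed.

Lemma SR_P_block j (rr : 'I_k) (c : 'I_b2) : 0 < j < p ->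
  rr.+1 = (p - j) * b2 + q + c.+1 -> P (j * b1) rr c = 1%R.
Proof.
move=> /andP[j_gt0 lt_jp] rrE.
rewrite SR_PE (_ : SR_entry _ _ _ _ _ _ _ = true) // /SR_entry.
rewrite dvdn_mull // mulnK // muln_gt0 j_gt0 b1_gt0 lt_jp rrE eqxx andbT.
by have := ltn_ord c; lia.
Qed.

Lemma SR_P_corner (rr : 'I_k) (c : 'I_b2) : c.+1 <= q -> rr.+1 = b2 + c.+1 ->
  P (p * b1) rr c = 1%R.
Proof.
move=> le_cq rrE; rewrite SR_PE (_ : SR_entry _ _ _ _ _ _ _ = true) // /SR_entry.
by rewrite mulnK // ltnn !andbF ltnn andbF eqxx le_cq rrE eqxx.
Qed.

Lemma SR_P_band l (rr : 'I_k) (c : 'I_b2) : 0 < l < b1 ->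
  P ((p - 1) * b1 + l) rr c =
    if [&& q < b1, rr.+1 == b2 + modc l q & c.+1 == q + modc l (b1 - q)]
    then 1%R else 0%R.
Proof.
move=> l_in; have band : (p - 1) * b1 < (p - 1) * b1 + l < p * b1.
  by have := mul_sub1n b1 p_gt0; lia.
by rewrite SR_PE /SR_entry (negbTE (band_not_block band)) andbF band addKn.
Qed.

Lemma SR_P_band_mc t l (rr j : 'I_k) (c : 'I_b2) : 0 < l < b1 -> j.+1 = b2 + q + c.+1 ->
  P ((p - 1) * b1 + l) rr c = SR_mc b1 b2 T q j t rr l.
Proof.
move=> l_in jE; rewrite SR_P_band // /SR_mc jE l_in.
have -> : b2 + q < b2 + q + c.+1 <= 2 * b2 + q by have := ltn_ord c; lia.
have -> : b2 + q + c.+1 - b2 - q = c.+1 by lia.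
by case: (q < b1); rewrite //= andbC eq_sym.
Qed.

Lemma band_sum_mpart (D : nat -> 'rV[F]_k) t (c : 'I_b2) (j : 'I_k) :
  j.+1 = b2 + q + c.+1 ->
  (\sum_(i < M.+1) \sum_(rr < k)
     (if ((p - 1) * b1 < i < p * b1)%N then parity_term P D (t + (p - 1) * b1)%N c i rr
      else 0) = mpart (SR_mc b1 b2 T q) D j t)%R.
Proof.
move=> jE; rewrite /mpart exchange_big; apply: eq_bigr => rr _ /=.
pose w d := if d <= t then (SR_mc b1 b2 T q j t rr d * D (t - d)%N 0 rr)%R else 0%R.
have pb1 := mul_sub1n b1 p_gt0.
rewrite pb1.
rewrite (sum_ord_window (fun i => parity_term P D (t + (p - 1) * b1) c i rr)) //; last by lia_mul.
transitivity (\sum_(1 <= d < b1) w d)%R.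
  apply: eq_big_nat => d d_in; rewrite /parity_term /w (addnC t) leq_add2l subnDl.
  by case: ifP => // _; rewrite (SR_P_band_mc t _ d_in jE) mulrC.
have tail_b1 d : b1 <= d < maxn b1 t.+1 -> w d = 0%R.
  move=> /andP[le_b1d _].
  by rewrite /w /SR_mc [d < b1]ltnNge le_b1d !andbF /= mul0r if_same.
have tail_t d : t.+1 <= d < maxn b1 t.+1 -> w d = 0%R.
  by move=> /andP[lt_td _]; rewrite /w leqNgt lt_td.
rewrite -(@sum_nat_zero_tail _ 1 b1 _ w _ tail_b1) ?b1_gt0 ?leq_maxl //.
rewrite (@sum_nat_zero_tail _ 1 t.+1 _ w _ tail_t) ?leq_maxr //.
by apply: eq_big_nat => d /andP[_ lt_dt]; rewrite /w -ltnS lt_dt.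
Qed.

Lemma parity_first_block_combined (D : nat -> 'rV[F]_k) t (c : 'I_b2) (j : 'I_k) :
  1 < p -> j.+1 = b2 + q + c.+1 ->
  (forall (i : 'I_M.+1) rr, i <= t + (p - 1) * b1 -> P i rr c != 0%R ->
     ~~ (((i == (p - 1) * b1 :> nat) && (rr == j)) || ((p - 1) * b1 < i < p * b1)) ->
     D (t + (p - 1) * b1 - i) 0%R rr = 0%R) ->
  parity M P D (t + (p - 1) * b1) 0%R c = combined (SR_mc b1 b2 T q) D j t.
Proof.
move=> p_gt1 jE D0.
rewrite (@parity_entry_restrict _ _ M P D _ c
  (fun i rr => ((i == (p - 1) * b1) && (rr == j)) || ((p - 1) * b1 < i < p * b1)) D0).
rewrite /combined -(band_sum_mpart D t jE).
have lt_p1M : (p - 1) * b1 < M.+1.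
  by have := mul_sub1n b1 p_gt0; lia_mul.
have -> : D t 0%R j = parity_term P D (t + (p - 1) * b1) c ((p - 1) * b1) j.
  rewrite /parity_term leq_addl addnK SR_P_block ?mulr1 //; first by lia.
  by rewrite (subKn p_gt0) mul1n.
rewrite -(sum_pair_pred1 (parity_term P D (t + (p - 1) * b1) c) j lt_p1M).
rewrite -big_split; apply: eq_bigr => i _; rewrite -big_split; apply: eq_bigr => rr _ /=.
case: (eqVneq (i : nat) ((p - 1) * b1)) => [->|_]; last by rewrite add0r.
by rewrite ltnn addr0; case: (rr == j).
Qed.

Section Recovery.

Variables (E : nat -> bool) (D : nat -> 'rV[F]_k) (H : nat).
Hypotheses (E_adm : burst_admissible b1 M E)
  (D_unerased : forall x, x <= H -> ~~ E x -> D x = 0%R)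
  (parity_unerased : forall x, x <= H -> ~~ E x -> parity M P D x = 0%R).

Lemma isolated_burst_at z : E z ->
  exists a e, a <= z < e /\ isolated_burst b1 M E a e.
Proof. by apply: isolated_burst_around => //; have := mul_sub1n b1 p_gt0; lia_mul. Qed.

Section InBurst.

Variables (a e : nat).
Hypothesis burst : isolated_burst b1 M E a e.

Lemma burst_short : e <= a + b1. Proof. by case: burst. Qed.

Lemma D_near_burst y x {rr : 'I_k} : a <= y < e -> x <= H ->
  x <= y + M -> y <= x + M -> x < a \/ e <= x -> D x 0%R rr = 0%R.
Proof.
move=> y_in le_xH *; rewrite D_unerased ?mxE //.
exact: (isolated_burst_unerased burst y_in).
Qed.

Lemma parity_near_burst y x : a <= y < e -> x <= H ->
  x <= y + M -> y <= x + M -> x < a \/ e <= x -> parity M P D x = 0%R.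
Proof.
move=> y_in le_xH *; rewrite parity_unerased //.
exact: (isolated_burst_unerased burst y_in).
Qed.

Lemma recover_middle_row_early u x (rr : 'I_k) : a <= u < e -> u < a + q ->
  u + p * b1 <= H -> rr.+1 = b2 + x -> 0 < x <= q -> D u 0%R rr = 0%R.
Proof.
move=> u_in lt_u le_uH rrE x_in.
have le_eab := burst_short.
have b1_le_pb1 := mul_sub1n b1 p_gt0.
have lt_xb2 : x - 1 < b2 by lia_mul.
have := parity_isolate (M := M) (P := P) (D := D) (t := u + p * b1) (c := Ordinal lt_xb2)
  (i0 := p * b1) (rr0 := rr).
rewrite addnK; apply; rewrite ?leq_addl //.
- by lia_mul.
- by apply: SR_P_corner => /=; lia_mul.
- by apply: (parity_near_burst u_in); lia_mul.
move=> i rr' le_i /SR_P_support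
  [[i_eq _]|[j j_in [i_eq _]]|[i_eq _ rr'E]|[l l_in [_ lt_qb1 _ cE]]] other.
- by apply: (D_near_burst u_in); lia_mul.
- have := ltn_mul_addn b1 (proj2 (andP j_in)); have := leq_pmull b1 (proj1 (andP j_in)).
  by move=> *; apply: (D_near_burst u_in); lia_mul.
- case/negP: other; rewrite i_eq eqxx /=; apply/eqP/ord_inj/succn_inj.
  by rewrite /= in rr'E; lia_mul.
- by have := modc_gt0 l (_ : 0 < b1 - q); rewrite /= in cE; lia_mul.
Qed.

Lemma recover_middle_row_step u x (rr : 'I_k) : a + q <= u < e -> a + p * b1 + q <= H.+1 ->
  (forall u' x' (rr' : 'I_k), u < u' < e -> rr'.+1 = b2 + x' -> 0 < x' <= q ->
     D u' 0%R rr' = 0%R) ->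
  rr.+1 = b2 + x -> 0 < x <= q -> D u 0%R rr = 0%R.
Proof.
move=> u_in le_aH later rrE x_in.
have le_eab := burst_short; have pb1 := mul_sub1n b1 p_gt0.
have u_in' : a <= u < e by lia_mul.
have lt_qb1 : q < b1 by lia_mul.
have b1q_gt0 : 0 < b1 - q by lia_mul.
(* The band entry of P_{(p-1)b1+l} ties row b2+x at slot u to slot u + l >= e. *)
have [l l_in lE] := modc_window (e - u - 1) q_gt0 x_in.
have lt_cb2 : q + modc l (b1 - q) - 1 < b2 by have := modc_le l b1q_gt0; lia_mul.
have cE : (Ordinal lt_cb2).+1 = q + modc l (b1 - q).
  by have := modc_gt0 l b1q_gt0; rewrite /=; lia_mul.
have := parity_isolate (M := M) (P := P) (D := D) (t := u + l + (p - 1) * b1)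
  (c := Ordinal lt_cb2) (i0 := (p - 1) * b1 + l) (rr0 := rr).
have -> : u + l + (p - 1) * b1 - ((p - 1) * b1 + l) = u by lia_mul.
apply; [lia_mul | lia_mul | | |].
- by rewrite SR_P_band ?lt_qb1 ?rrE ?lE ?cE ?eqxx //; lia_mul.
- by apply: (parity_near_burst u_in'); lia_mul.
move=> i rr' le_i /SR_P_support
  [[i_eq _]|[j j_in [i_eq _]]|[_ le_cq _]|[l' l'_in [i_eq _ rr'E cE']]] other.
- by apply: (D_near_burst u_in'); lia_mul.
- have := ltn_mul_addn b1 (proj2 (andP j_in)).
  by move=> *; apply: (D_near_burst u_in'); lia_mul.
- by have := modc_gt0 l b1q_gt0; lia_mul.
have eq_mod : modc l' (b1 - q) = modc l (b1 - q) by lia_mul.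
have x'_in : 0 < modc l' q <= q by rewrite modc_gt0 ?modc_le.
have [lt_ll'|lt_l'l|eq_ll'] := ltngtP l l'.
- have := modc_gap b1q_gt0 (esym eq_mod) lt_ll' => gap.
  have [lt_a|le_a] := ltnP (u + l + (p - 1) * b1 - i) a.
    by apply: (D_near_burst u_in'); lia_mul.
  by apply: (recover_middle_row_early _ _ _ rr'E x'_in); lia_mul.
- have := modc_gap b1q_gt0 eq_mod lt_l'l => gap.
  have [lt_e|le_e] := ltnP (u + l + (p - 1) * b1 - i) e.
    by apply: (later _ _ _ _ rr'E x'_in); lia_mul.
  by apply: (D_near_burst u_in'); lia_mul.
- case/negP: other; rewrite i_eq -eq_ll' eqxx /=; apply/eqP/ord_inj/succn_inj.
  by rewrite -eq_ll' in rr'E; lia_mul.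
Qed.

Lemma recover_middle_row_in_burst u x (rr : 'I_k) : a + p * b1 + q <= H.+1 ->
  a <= u < e -> rr.+1 = b2 + x -> 0 < x <= q -> D u 0%R rr = 0%R.
Proof.
move=> le_aH; have [n] := ubnP (e - u); elim: n u x rr => // n IH u x rr lt_n u_in rrE x_in.
have [lt_u|le_u] := ltnP u (a + q).
  by apply: (recover_middle_row_early u_in lt_u _ rrE x_in); lia_mul.
apply: (recover_middle_row_step _ le_aH _ rrE x_in) => [|u' x' rr' u'_in]; first by lia_mul.
by apply: IH; lia_mul.
Qed.

Lemma recover_top_row_in_burst t (rr : 'I_k) (c : 'I_b2) : a <= t < e ->
  t + p * b1 + q <= H -> rr.+1 = c.+1 -> D t 0%R rr = 0%R.
Proof.
move=> t_in le_tH rrE.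
have le_eab := burst_short; have pb1 := mul_sub1n b1 p_gt0.
have := parity_isolate (M := M) (P := P) (D := D) (t := t + p * b1 + q) (c := c)
  (i0 := p * b1 + q) (rr0 := rr).
rewrite -addnA addnK; apply; rewrite ?leq_addl ?SR_P_last //.
- by apply: (parity_near_burst t_in); lia_mul.
move=> i rr' le_i /SR_P_support
  [[i_eq rr'E]|[j j_in [i_eq _]]|[i_eq le_cq rr'E]|[l l_in [i_eq _ rr'E _]]] other.
- by case/negP: other; rewrite i_eq eqxx /=; apply/eqP/ord_inj/succn_inj; lia.
- have := ltn_mul_addn b1 (proj2 (andP j_in)).
  by move=> *; apply: (D_near_burst t_in); lia_mul.
- have [lt_e|le_e] := ltnP (t + p * b1 + q - i) e.
    by apply: (recover_middle_row_in_burst _ _ rr'E); lia_mul.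
  by apply: (D_near_burst t_in); lia_mul.
- have x_in : 0 < modc l q <= q by rewrite modc_gt0 ?modc_le.
  have [lt_e|le_e] := ltnP (t + p * b1 + q - i) e.
    by apply: (recover_middle_row_in_burst _ _ rr'E x_in); lia_mul.
  by apply: (D_near_burst t_in); lia_mul.
Qed.

Lemma recover_block_row_in_burst t r (rr : 'I_k) (c : 'I_b2) : 2 <= r < p ->
  a <= t < e -> t + (p - r) * b1 <= H -> rr.+1 = r * b2 + q + c.+1 -> D t 0%R rr = 0%R.
Proof.
move=> /andP[r_ge2 lt_rp] t_in le_tH rrE.
have le_eab := burst_short; have pb1 := mul_sub1n b1 p_gt0.
have pr_in : 0 < p - r < p by lia.
have prb1 : (p - r) * b1 + r * b1 = p * b1 by rewrite -mulnDl subnK // ltnW.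
have b1_le_rb1 : b1 <= r * b1 by rewrite leq_pmull //; lia.
have b1_le_prb1 : b1 <= (p - r) * b1 by rewrite leq_pmull // subn_gt0.
have := ltn_mul_addn b1 (_ : p - r < p - 1) => /(_ ltac:(lia)) lt_pr_p1.
have := parity_isolate (M := M) (P := P) (D := D) (t := t + (p - r) * b1) (c := c)
  (i0 := (p - r) * b1) (rr0 := rr).
rewrite addnK; apply; rewrite ?leq_addl //.
- by lia_mul.
- by apply: SR_P_block; rewrite // (subKn (ltnW lt_rp)).
- by apply: (parity_near_burst t_in); lia_mul.
move=> i rr' le_i /SR_P_support
  [[i_eq _]|[j j_in [i_eq rr'E]]|[i_eq _ _]|[l l_in [i_eq _ _ _]]] other.
- by apply: (D_near_burst t_in); lia_mul.
- have := ltn_mul_addn b1 (proj2 (andP j_in)) => jb1.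
  have [lt_j|gt_j|eq_j] := ltngtP j (p - r).
  + have := ltn_mul_addn b1 lt_j.
    by move=> *; apply: (D_near_burst t_in); lia_mul.
  + have := ltn_mul_addn b1 gt_j.
    by move=> *; apply: (D_near_burst t_in); lia_mul.
  + case/negP: other; rewrite i_eq eq_j eqxx /=; apply/eqP/ord_inj/succn_inj.
    by rewrite eq_j (subKn (ltnW lt_rp)) in rr'E; lia.
- by apply: (D_near_burst t_in); lia_mul.
- by apply: (D_near_burst t_in); lia_mul.
Qed.

End InBurst.

Lemma recover_by_bursts x (rr : 'I_k) : x <= H ->
  (forall a e, isolated_burst b1 M E a e -> a <= x < e -> D x 0%R rr = 0%R) ->
  D x 0%R rr = 0%R.
Proof.
move=> le_xH in_burst; case Ex: (E x); last by rewrite D_unerased ?Ex ?mxE.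
by have [a [e [x_in burst]]] := isolated_burst_at Ex; apply: in_burst burst x_in.
Qed.

Lemma recover_top_row x (rr : 'I_k) (c : 'I_b2) : x + p * b1 + q <= H ->
  rr.+1 = c.+1 -> D x 0%R rr = 0%R.
Proof.
move=> le_xH rrE; apply: recover_by_bursts => [|a e burst x_in]; first by lia_mul.
exact: (recover_top_row_in_burst burst x_in le_xH rrE).
Qed.

Lemma recover_middle_row u x (rr : 'I_k) : u + p * b1 <= H -> rr.+1 = b2 + x ->
  0 < x <= q -> D u 0%R rr = 0%R.
Proof.
move=> le_uH rrE x_in; apply: recover_by_bursts => [|a e burst u_in]; first by lia_mul.
have [lt_u|le_u] := ltnP u (a + q).
  exact: (recover_middle_row_early burst u_in lt_u le_uH rrE x_in).
by apply: (recover_middle_row_in_burst burst _ u_in rrE x_in); lia_mul.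
Qed.

Lemma recover_block_row x r (rr : 'I_k) (c : 'I_b2) : 2 <= r < p ->
  x + (p - r) * b1 <= H -> rr.+1 = r * b2 + q + c.+1 -> D x 0%R rr = 0%R.
Proof.
move=> r_in le_xH rrE; apply: recover_by_bursts => [|a e burst x_in]; first by lia_mul.
exact: (recover_block_row_in_burst burst r_in x_in le_xH rrE).
Qed.

Lemma recover_first_block_combined t (c : 'I_b2) (j : 'I_k) : 1 < p ->
  j.+1 = b2 + q + c.+1 -> t + (p - 1) * b1 <= H -> combined (SR_mc b1 b2 T q) D j t = 0%R.
Proof.
move=> p_gt1 jE le_tH; have pb1 := mul_sub1n b1 p_gt0.
have b1_le_p1b1 : b1 <= (p - 1) * b1 by rewrite leq_pmull // subn_gt0.
have [Es|nEs] := boolP (E (t + (p - 1) * b1)).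
  (* An erasure at t - d would lie in the burst of t + (p-1)b1, at distance >= b1. *)
  have nE d : d < b1 -> d <= t -> ~~ E (t - d).
    move=> lt_db1 le_dt; apply/negP => Etd.
    by have /(erased_interval E_adm Etd Es) [] : t - d <= t + (p - 1) * b1 <= t - d + M;
      lia_mul.
  have Dt0 : D t = 0%R by apply: D_unerased; [lia_mul | rewrite -[t]subn0 nE].
  rewrite /combined Dt0 mxE add0r.
  apply: big1 => jj _; apply: big1_seq => d /andP[_]; rewrite mem_index_iota => d_in.
  rewrite /SR_mc; case: ifP => [/and5P[_ _ /andP[_ lt_db1] _ _]|_]; last by rewrite mul0r.
  by rewrite D_unerased ?mxE ?mulr0 ?nE //; lia_mul.
rewrite -(@parity_first_block_combined D t c j) ?parity_unerased ?mxE //.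
move=> i rr le_i /SR_P_support
  [[i_eq rrE]|[j' j'_in [i_eq rrE]]|[i_eq le_cq rrE]|[l l_in [i_eq _ _ _]]] other.
- by apply: (recover_top_row _ rrE); lia_mul.
- have [lt_j'|ge_j'] := ltnP j' (p - 1).
    have := ltn_mul_addn b1 (proj2 (andP j'_in)) => j'b1.
    apply: (@recover_block_row _ (p - j') _ c); first by lia.
      by rewrite (subKn (ltnW (proj2 (andP j'_in)))); lia_mul.
    by rewrite rrE.
  have j'E : j' = p - 1 by lia.
  case/negP: other; rewrite i_eq j'E eqxx /=; apply/orP; left; apply/eqP/ord_inj/succn_inj.
  by rewrite rrE jE j'E (subKn p_gt0) mul1n.
- by apply: (recover_middle_row _ rrE); lia_mul.
- by case/negP: other; rewrite i_eq; apply/orP; right; lia_mul.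
Qed.

End Recovery.

Lemma SR_mc_eq0 (i : 'I_k) t jj d : ~~ (b2 + q < i.+1 <= 2 * b2 + q) ->
  SR_mc b1 b2 T q i t jj d = 0%R.
Proof. by move=> /negPf i_out; rewrite /SR_mc i_out andbF. Qed.

Lemma SR_delay_cases (i : 'I_k) : T - b1 = p * b2 + q ->
  [\/ exists2 c : 'I_b2, i.+1 = c.+1 & SR_delay b1 b2 T p q i = p * b1 + q,
      exists2 x, 0 < x <= q & i.+1 = b2 + x /\ SR_delay b1 b2 T p q i = p * b1 |
      exists r (c : 'I_b2),
        [/\ 0 < r < p, i.+1 = r * b2 + q + c.+1 & SR_delay b1 b2 T p q i = (p - r) * b1]].
Proof.
move=> T_split; rewrite /SR_delay.
have [le_ib2|lt_b2i] := leqP i.+1 b2.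
  by apply: Or31; exists (Ordinal le_ib2).
have [le_iq|lt_qi] := leqP i.+1 (b2 + q).
  by apply: Or32; exists (i.+1 - b2); lia.
apply: Or33; have b2_gt0 : 0 < b2 by lia.
have lt_mod := ltn_pmod (i - q) b2_gt0.
exists ((i - q) %/ b2), (Ordinal lt_mod); rewrite /= (_ : i.+1 - q - 1 = i - q); last by lia.
have := divn_eq (i - q) b2; have := ltn_ord i; split => //.
- by rewrite divn_gt0 // ltn_divLR //; lia_mul.
- by lia_mul.
Qed.

Lemma SR_ext_delay_profile : T - b1 = p * b2 + q ->
  ext_delay_profile M P b1 (SR_delay b1 b2 T p q) (SR_mc b1 b2 T q).
Proof.
move=> T_split E E_adm S S' t i same.
apply/eqP; rewrite -subr_eq0 -combinedB; apply/eqP.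
set D := fun x => (S x - S' x)%R; set H := t + SR_delay b1 b2 T p q i.
have D_unerased x : x <= H -> ~~ E x -> D x = 0%R.
  by move=> le_xH nEx; have [Sx _] := same x le_xH nEx; rewrite /D Sx subrr.
have parity_unerased x : x <= H -> ~~ E x -> parity M P D x = 0%R.
  by move=> le_xH nEx; have [_ Px] := same x le_xH nEx; rewrite /D parityB Px subrr.
have combined_entry : ~~ (b2 + q < i.+1 <= 2 * b2 + q) ->
    combined (SR_mc b1 b2 T q) D i t = D t 0%R i.
  by move=> i_out; rewrite /combined mpart_eq0 ?addr0 // => jj d; rewrite SR_mc_eq0.
case: (SR_delay_cases i T_split) =>
  [[c iE delayE]|[x x_in [iE delayE]]|[r [c [r_in iE delayE]]]].
- rewrite combined_entry; last by have := ltn_ord c; lia.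
  by apply: (recover_top_row E_adm D_unerased parity_unerased _ iE); rewrite /H delayE addnA.
- rewrite combined_entry; last by lia.
  by apply: (recover_middle_row E_adm D_unerased parity_unerased _ iE x_in); rewrite /H delayE.
have [r1|r_gt1] := eqVneq r 1.
  rewrite {}r1 mul1n in iE delayE.
  by apply: (recover_first_block_combined E_adm D_unerased parity_unerased _ iE);
    rewrite ?delayE //; lia.
have r_ge2 : 2 <= r by lia.
rewrite combined_entry; last by have := leq_mul r_ge2 (leqnn b2); lia_mul.
by apply: (recover_block_row E_adm D_unerased parity_unerased _ _ iE); rewrite ?delayE //; lia.
Qed.

End SRCode.

Theorem mainTheorem7 (b1 b2 T p q : nat) :
  (0 < b1)%N -> (b1 < b2)%N -> (b1 + b2 <= T)%N ->
  (T - b1 = p * b2 + q)%N -> (1 <= p)%N -> (1 <= q)%N -> (q < b2)%N ->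
  ext_delay_separable (T - b2) (SR_P b1 b2 T p q) b1
    (SR_delay b1 b2 T p q) (SR_mc b1 b2 T q) (SR_AI b1 b2 T q).
Proof.
(* [b1 + b2 <= T] follows from the other hypotheses. *)
move=> b1_gt0 lt_b1b2 _ T_split p_gt0 q_gt0 lt_qb2.
have delay_le_M : p * b1 + q <= T - b2.
  have := leq_mul (leqnn (p - 1)) (ltnW lt_b1b2).
  by have := mul_sub1n b1 p_gt0; have := mul_sub1n b2 p_gt0; lia_mul.
have le_b1b2 := ltnW lt_b1b2.
split; first exact: (SR_ext_delay_profile b1_gt0 le_b1b2 p_gt0 q_gt0 lt_qb2 delay_le_M T_split).
split => i t j d; first exact: SR_mc_eq0.
rewrite /SR_AI !negbK => _ j_in; rewrite /SR_mc; case: ifP => // /and5P[_ _ _ _ /eqP jE].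
by have := modc_le d q_gt0; lia.
Qed.
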